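(* Let $c_1,\dots,c_k\in(0,\infty)$ be fixed constants, and let $\lambda\in(0,\infty)^k$ be a tuning parameter satisfying, for every $j\in\{1,\dots,k\}$, $$\frac{\lambda_j}{2g'(\|Y-X\hat\beta^\lambda\|_2^2)}=c_j\,\|(XP_jM_j^{+})^\top\varepsilon\|_{q_j}^*$$ (such a $\lambda$ exists with probability one). Then, with probability one, for any minimizer $\hat\beta^\lambda$ of the objective below, $$\frac1n\|X(\beta^*-\hat\beta^\lambda)\|_2^2\le\inf_{u\in(0,1),\,\beta\in\mathbb{R}^p}\Big\{\frac{1}{4u(1-u)n}\|X(\beta^*-\beta)\|_2^2+\frac1n\sum_{j=1}^k\frac{1+c_j}{1-u}\|(XP_jM_j^{+})^\top\varepsilon\|_{q_j}^*\,\|M_j\beta\|_{q_j}-\frac1n\sum_{j=1}^k\frac{c_j-1}{1-u}\|(XP_jM_j^{+})^\top\varepsilon\|_{q_j}^*\,\|M_j\hat\beta^\lambda\|_{q_j}\Big\}.$$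
   Context: Standing setup. Model: $Y=X\beta^*+\varepsilon$ with $Y\in\mathbb{R}^n$, $X\in\mathbb{R}^{n\times p}$, $\beta^*\in\mathbb{R}^p$, $\varepsilon\in\mathbb{R}^n$ (random; no distributional assumptions beyond those below). Link function $g:\mathbb{R}\to[0,\infty)$ with $g(0)=0$, $g$ continuous and strictly increasing on $[0,\infty)$, continuously differentiable on $(0,\infty)$ with strictly positive and non-increasing derivative $g'$, and such that $\alpha\mapsto g(\|\alpha\|_2^2)$ is strictly convex on $\mathbb{R}^n$. Penalty: $k\ge1$, matrices $M_1,\dots,M_k\in\mathbb{R}^{p\times p}$ with $\bigcap_{j=1}^k\mathrm{Ker}(M_j)=\{0\}$, exponents $q_j\ge1$, $\|\cdot\|_{q_j}$ the $\ell_{q_j}$-norm on $\mathbb{R}^p$, and $\|\cdot\|_{q_j}^*$ its dual norm (the $\ell_{p_j}$-norm with $1/p_j+1/q_j=1$). For $\lambda\in(0,\infty)^k$, $\hat\beta^\lambda$ denotes any element of $\arg\min_{\beta\in\mathbb{R}^p}\{g(\|Y-X\beta\|_2^2)+\sum_{j=1}^k\lambda_j\|M_j\beta\|_{q_j}\}$. $A^+$ denotes the Moore–Penrose pseudoinverse; $P_1,\dots,P_k\in\mathbb{R}^{p\times p}$ are fixed projection matrices with $\sum_{j=1}^kP_jM_j^+M_j=I_{p\times p}$. Noise assumption: with probability one, $Y\neq0$ and $\min_{j}\|(XP_jM_j^{+})^\top\varepsilon\|_{q_j}^*>0$. *)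

From Stdlib Require Import Reals Lra List.
Import ListNotations.
Open Scope R_scope.

(* Vectors are functions nat -> R (only indices < dimension matter);
   matrices are functions nat -> nat -> R (row, column). *)
Definition vec := nat -> R.
Definition mat := nat -> nat -> R.

Definition fsum (d : nat) (f : nat -> R) : R :=
  fold_right Rplus 0 (map f (seq 0 d)).

(* real power with the convention 0 ^ y = 0 (used with y > 0) *)
Definition rpow (x y : R) : R :=
  if Req_EM_T x 0 then 0 else Rpower x y.

Definition lqnorm (d : nat) (q : R) (x : vec) : R :=
  rpow (fsum d (fun i => rpow (Rabs (x i)) q)) (/ q).

Definition supnorm (d : nat) (x : vec) : R :=
  fold_right Rmax 0 (map (fun i => Rabs (x i)) (seq 0 d)).

(* dual norm of l_q (q >= 1): the l_p norm with 1/p + 1/q = 1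
   (p = infinity when q = 1) *)
Definition dualnorm (d : nat) (q : R) (x : vec) : R :=
  if Req_EM_T q 1 then supnorm d x else lqnorm d (q / (q - 1)) x.

Definition sqnorm (d : nat) (x : vec) : R := fsum d (fun i => x i * x i).

Definition mulmv (d : nat) (A : mat) (v : vec) : vec :=
  fun i => fsum d (fun l => A i l * v l).

Definition mulmm (d : nat) (A B : mat) : mat :=
  fun i j => fsum d (fun l => A i l * B l j).

Definition trmx (A : mat) : mat := fun i j => A j i.

Definition vsub (x y : vec) : vec := fun i => x i - y i.
Definition vadd (x y : vec) : vec := fun i => x i + y i.
Definition vscale (t : R) (x : vec) : vec := fun i => t * x i.

Definition mat_eq (m r : nat) (A B : mat) : Prop :=
  forall i j, (i < m)%nat -> (j < r)%nat -> A i j = B i j.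

(* Mp is the Moore-Penrose pseudoinverse of the p x p matrix M
   (the four Penrose conditions; the pseudoinverse is unique). *)
Definition is_MP_pinv (p : nat) (M Mp : mat) : Prop :=
  mat_eq p p (mulmm p (mulmm p M Mp) M) M /\
  mat_eq p p (mulmm p (mulmm p Mp M) Mp) Mp /\
  mat_eq p p (trmx (mulmm p M Mp)) (mulmm p M Mp) /\
  mat_eq p p (trmx (mulmm p Mp M)) (mulmm p Mp M).

Definition is_projection (p : nat) (P : mat) : Prop :=
  mat_eq p p (mulmm p P P) P.

Definition idmx : mat := fun i j => if Nat.eqb i j then 1 else 0.

Definition link_ok (n : nat) (g gp : R -> R) : Prop :=
  g 0 = 0 /\
  (forall x, 0 <= g x) /\
  (forall x eps, 0 <= x -> 0 < eps -> exists delta, 0 < delta /\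
      forall y, 0 <= y -> Rabs (y - x) < delta -> Rabs (g y - g x) < eps) /\
  (forall x y, 0 <= x -> x < y -> g x < g y) /\
  (forall x, 0 < x -> derivable_pt_lim g x (gp x)) /\
  (forall x, 0 < x -> continuity_pt gp x) /\
  (forall x, 0 < x -> 0 < gp x) /\
  (forall x y, 0 < x -> x <= y -> gp y <= gp x) /\
  (forall (a b : vec) t, (exists i, (i < n)%nat /\ a i <> b i) -> 0 < t < 1 ->
      g (sqnorm n (vadd (vscale t a) (vscale (1 - t) b)))
        < t * g (sqnorm n a) + (1 - t) * g (sqnorm n b)).

Definition objective (n p k : nat) (g : R -> R) (X : mat) (Y : vec)
  (M : nat -> mat) (q : nat -> R) (lam : nat -> R) (b : vec) : R :=
  g (sqnorm n (vsub Y (mulmv p X b)))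
  + fsum k (fun j => lam j * lqnorm p (q j) (mulmv p (M j) b)).

(* Let [s = |Y - X bh|^2].  Differentiating the objective along the segment from the
   minimizer [bh] towards an arbitrary [beta] (the penalty is convex) gives
   [2 g'(s) <Y - X bh, X (beta - bh)> <= pen beta - pen bh], and the tuning condition
   rewrites the right-hand side as [2 g'(s) sum_j c_j D_j (|M_j beta| - |M_j bh|)], where
   [D_j] is the dual norm of the design noise [(X P_j M_j^+)^T eps].  Since
   [Y - X bh = X (beta* - bh) + eps] and [sum_j P_j M_j^+ M_j = I], the noise term
   [<eps, X v>] splits into [sum_j <(X P_j M_j^+)^T eps, M_j v>], which Hoelder bounds by
   [sum_j D_j |M_j v|].  This leaves
   [|X (beta* - bh)|^2 <= <X (beta* - bh), X (beta* - beta)> + K], and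
   [<x, y> <= u |x|^2 + |y|^2 / (4 u)] absorbs the cross term. *)
From Stdlib Require Import Reals Lra Lia List.
Open Scope R_scope.

Definition dot (d : nat) (x y : vec) : R := fsum d (fun i => x i * y i).

Definition design_noise (n p : nat) (X : mat) (P Mp : nat -> mat) (e : vec) (j : nat) : vec :=
  mulmv n (trmx (mulmm p (mulmm p X (P j)) (Mp j))) e.

Definition penalty (p k : nat) (M : nat -> mat) (q lam : nat -> R) (b : vec) : R :=
  fsum k (fun j => lam j * lqnorm p (q j) (mulmv p (M j) b)).

Lemma fold_right_Rplus_acc (l : list R) (x : R) :
  fold_right Rplus x l = fold_right Rplus 0 l + x.
Proof. induction l as [|y l IH]; simpl; [lra | rewrite IH; lra]. Qed.

Lemma fsum_S (d : nat) (f : nat -> R) : fsum (S d) f = fsum d f + f d.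
Proof.
  unfold fsum. rewrite seq_S, map_app, fold_right_app. simpl.
  rewrite fold_right_Rplus_acc. lra.
Qed.

Lemma fsum_ext (d : nat) (f g : nat -> R) :
  (forall i, (i < d)%nat -> f i = g i) -> fsum d f = fsum d g.
Proof.
  induction d as [|d IH]; intros Hfg; [reflexivity|].
  rewrite !fsum_S, IH, Hfg; auto; intros; apply Hfg; lia.
Qed.

Lemma fsum_const0 (d : nat) : fsum d (fun _ => 0) = 0.
Proof. induction d as [|d IH]; [reflexivity|]. rewrite fsum_S, IH. lra. Qed.

Lemma fsum_plus (d : nat) (f g : nat -> R) :
  fsum d (fun i => f i + g i) = fsum d f + fsum d g.
Proof. induction d as [|d IH]; [unfold fsum; simpl; lra|]. rewrite !fsum_S, IH. lra. Qed.

Lemma fsum_minus (d : nat) (f g : nat -> R) :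
  fsum d (fun i => f i - g i) = fsum d f - fsum d g.
Proof. induction d as [|d IH]; [unfold fsum; simpl; lra|]. rewrite !fsum_S, IH. lra. Qed.

Lemma fsum_scal (d : nat) (c : R) (f : nat -> R) :
  fsum d (fun i => c * f i) = c * fsum d f.
Proof. induction d as [|d IH]; [unfold fsum; simpl; lra|]. rewrite !fsum_S, IH. lra. Qed.

Lemma fsum_scal_r (d : nat) (c : R) (f : nat -> R) :
  fsum d (fun i => f i * c) = fsum d f * c.
Proof. induction d as [|d IH]; [unfold fsum; simpl; lra|]. rewrite !fsum_S, IH. lra. Qed.

Lemma fsum_div_r (d : nat) (c : R) (f : nat -> R) :
  fsum d (fun i => f i / c) = fsum d f / c.
Proof. apply fsum_scal_r. Qed.

Lemma fsum_swap (d e : nat) (F : nat -> nat -> R) :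
  fsum d (fun i => fsum e (fun j => F i j)) = fsum e (fun j => fsum d (fun i => F i j)).
Proof.
  induction d as [|d IH].
  - symmetry. apply fsum_const0.
  - rewrite fsum_S, IH, <- fsum_plus. apply fsum_ext. intros. rewrite fsum_S. reflexivity.
Qed.

Lemma fsum_le (d : nat) (f g : nat -> R) :
  (forall i, (i < d)%nat -> f i <= g i) -> fsum d f <= fsum d g.
Proof.
  induction d as [|d IH]; intros Hfg; [unfold fsum; simpl; lra|]. rewrite !fsum_S.
  apply Rplus_le_compat; [apply IH; intros | apply Hfg]; try apply Hfg; lia.
Qed.

Lemma fsum_nonneg (d : nat) (f : nat -> R) :
  (forall i, (i < d)%nat -> 0 <= f i) -> 0 <= fsum d f.
Proof. intros Hf. rewrite <- (fsum_const0 d). apply fsum_le; auto. Qed.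

Lemma fsum_eq0_nonneg (d : nat) (f : nat -> R) :
  (forall i, (i < d)%nat -> 0 <= f i) -> fsum d f = 0 -> forall i, (i < d)%nat -> f i = 0.
Proof.
  induction d as [|d IH]; intros Hf Hsum i Hi; [lia|]. rewrite fsum_S in Hsum.
  assert (0 <= fsum d f) by (apply fsum_nonneg; intros; apply Hf; lia).
  assert (0 <= f d) by (apply Hf; lia).
  destruct (Nat.eq_dec i d) as [->|Hid]; [lra|].
  apply IH; [intros; apply Hf; lia | lra | lia].
Qed.

Lemma Rabs_fsum_le (d : nat) (f : nat -> R) :
  Rabs (fsum d f) <= fsum d (fun i => Rabs (f i)).
Proof.
  induction d as [|d IH]; [unfold fsum; simpl; rewrite Rabs_R0; lra|]. rewrite !fsum_S.
  eapply Rle_trans; [apply Rabs_triang | lra].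
Qed.

Lemma fsum_idmx (d l : nat) (v : vec) :
  (l < d)%nat -> fsum d (fun m => idmx l m * v m) = v l.
Proof.
  induction d as [|d IH]; intros Hl; [lia|]. rewrite fsum_S. unfold idmx at 2.
  destruct (Nat.eq_dec l d) as [->|Hld].
  - rewrite Nat.eqb_refl, (fsum_ext _ _ (fun _ => 0)), fsum_const0; [lra|].
    intros i Hi. unfold idmx. rewrite (proj2 (Nat.eqb_neq d i)) by lia. lra.
  - rewrite (proj2 (Nat.eqb_neq l d)), IH by lia. lra.
Qed.

Lemma supnorm_ge (d : nat) (x : vec) (i : nat) : (i < d)%nat -> Rabs (x i) <= supnorm d x.
Proof.
  intros Hi. unfold supnorm.
  assert (Hin : In (Rabs (x i)) (map (fun i => Rabs (x i)) (seq 0 d))).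
  { apply (in_map (fun i => Rabs (x i))), in_seq. lia. }
  revert Hin. generalize (map (fun i => Rabs (x i)) (seq 0 d)) as l.
  induction l as [|y l IH]; simpl; intros Hin; [contradiction|].
  destruct Hin as [<-|Hin]; [apply Rmax_l | eapply Rle_trans; [apply IH, Hin | apply Rmax_r]].
Qed.

Lemma rpow_0x (y : R) : rpow 0 y = 0.
Proof. unfold rpow. destruct (Req_EM_T 0 0); [reflexivity | congruence]. Qed.

Lemma rpow_Rpower (x y : R) : 0 < x -> rpow x y = Rpower x y.
Proof. intros Hx. unfold rpow. destruct (Req_EM_T x 0); [lra | reflexivity]. Qed.

Lemma rpow_ge0 (x y : R) : 0 <= rpow x y.
Proof.
  unfold rpow. destruct (Req_EM_T x 0); [lra|]. left. apply exp_pos.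
Qed.

Lemma rpow_gt0 (x y : R) : 0 < x -> 0 < rpow x y.
Proof. intros Hx. rewrite rpow_Rpower by exact Hx. apply exp_pos. Qed.

Lemma rpow_eq0 (x y : R) : rpow x y = 0 -> x = 0.
Proof.
  unfold rpow. destruct (Req_EM_T x 0) as [|Hx]; [auto|].
  intros H. pose proof (exp_pos (y * ln x)). unfold Rpower in H. lra.
Qed.

Lemma rpow_1 (x : R) : 0 <= x -> rpow x 1 = x.
Proof.
  intros [Hx|<-]; [rewrite rpow_Rpower by exact Hx; apply Rpower_1, Hx | apply rpow_0x].
Qed.

Lemma rpow_1x (y : R) : rpow 1 y = 1.
Proof. rewrite rpow_Rpower by lra. unfold Rpower. rewrite ln_1, Rmult_0_r. apply exp_0. Qed.

Lemma rpow_rpow (x a b : R) : 0 <= x -> rpow (rpow x a) b = rpow x (a * b).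
Proof.
  intros [Hx|<-]; [|rewrite !rpow_0x; reflexivity].
  rewrite !(rpow_Rpower x), rpow_Rpower by (auto; apply exp_pos). apply Rpower_mult.
Qed.

Lemma rpow_mult_distr (x y a : R) : 0 <= x -> 0 <= y -> rpow (x * y) a = rpow x a * rpow y a.
Proof.
  intros [Hx|<-] [Hy|<-]; try (rewrite ?Rmult_0_l, ?Rmult_0_r, !rpow_0x; ring).
  rewrite !rpow_Rpower by (auto; apply Rmult_lt_0_compat; auto).
  symmetry. apply Rpower_mult_distr; auto.
Qed.

Lemma rpow_plus (x a b : R) : 0 < x -> rpow x (a + b) = rpow x a * rpow x b.
Proof. intros Hx. rewrite !rpow_Rpower by exact Hx. apply Rpower_plus. Qed.

Lemma rpow_Rinv (x a : R) : 0 < x -> rpow (/ x) a = / rpow x a.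
Proof.
  intros Hx. pose proof (rpow_gt0 x a Hx).
  assert (rpow (/ x) a * rpow x a = 1).
  { rewrite <- rpow_mult_distr, Rinv_l, rpow_1x by (try left; try apply Rinv_0_lt_compat; lra).
    reflexivity. }
  field_simplify_eq; lra.
Qed.

Lemma exp_convex (t x y : R) : 0 <= t <= 1 ->
  exp (t * x + (1 - t) * y) <= t * exp x + (1 - t) * exp y.
Proof.
  intros Ht. set (m := t * x + (1 - t) * y).
  assert (Ex : exp x = exp m * exp (x - m)) by (rewrite <- exp_plus; f_equal; ring).
  assert (Ey : exp y = exp m * exp (y - m)) by (rewrite <- exp_plus; f_equal; ring).
  pose proof (exp_ineq1_le (x - m)). pose proof (exp_ineq1_le (y - m)).
  pose proof (exp_pos m).
  assert (exp m * (1 + (x - m)) <= exp m * exp (x - m)) by (apply Rmult_le_compat_l; lra).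
  assert (exp m * (1 + (y - m)) <= exp m * exp (y - m)) by (apply Rmult_le_compat_l; lra).
  assert (t * (exp m * (1 + (x - m))) + (1 - t) * (exp m * (1 + (y - m))) = exp m)
    by (unfold m; ring).
  rewrite Ex, Ey. nra.
Qed.

Lemma young (a b r s : R) : 0 <= a -> 0 <= b -> 1 < r -> 1 < s -> / r + / s = 1 ->
  a * b <= rpow a r / r + rpow b s / s.
Proof.
  intros Ha Hb Hr Hs Hrs.
  assert (0 < / r) by (apply Rinv_0_lt_compat; lra).
  assert (0 < / s) by (apply Rinv_0_lt_compat; lra).
  assert (0 <= rpow a r / r) by (apply Rmult_le_pos; [apply rpow_ge0 | lra]).
  assert (0 <= rpow b s / s) by (apply Rmult_le_pos; [apply rpow_ge0 | lra]).
  destruct Ha as [Ha|<-]; [|rewrite Rmult_0_l; lra].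
  destruct Hb as [Hb|<-]; [|rewrite Rmult_0_r; lra].
  rewrite !rpow_Rpower by assumption. unfold Rpower, Rdiv.
  replace (a * b) with (exp (/ r * (r * ln a) + (1 - / r) * (s * ln b))).
  - replace (1 - / r) with (/ s) by lra.
    rewrite (Rmult_comm (exp (r * _))), (Rmult_comm (exp (s * _))).
    replace (/ s) with (1 - / r) by lra. apply exp_convex. lra.
  - replace (/ r * (r * ln a) + (1 - / r) * (s * ln b)) with (ln a + ln b)
      by (replace (1 - / r) with (/ s) by lra; field; lra).
    rewrite exp_plus, !exp_ln; auto.
Qed.

Lemma lqnorm_ge0 (d : nat) (q : R) (x : vec) : 0 <= lqnorm d q x.
Proof. apply rpow_ge0. Qed.

Lemma lqnorm_ext (d : nat) (q : R) (x y : vec) :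
  (forall i, (i < d)%nat -> x i = y i) -> lqnorm d q x = lqnorm d q y.
Proof. intros Hxy. unfold lqnorm. f_equal. apply fsum_ext. intros i Hi. rewrite Hxy; auto. Qed.

Lemma sum_rpow_ge0 (d : nat) (q : R) (x : vec) : 0 <= fsum d (fun i => rpow (Rabs (x i)) q).
Proof. apply fsum_nonneg. intros. apply rpow_ge0. Qed.

Lemma lqnorm_eq0 (d : nat) (q : R) (x : vec) :
  lqnorm d q x = 0 -> forall i, (i < d)%nat -> x i = 0.
Proof.
  intros H0 i Hi. apply rpow_eq0 in H0.
  pose proof (fsum_eq0_nonneg _ _ (fun i _ => rpow_ge0 (Rabs (x i)) q) H0 i Hi) as Hxi.
  apply rpow_eq0 in Hxi. destruct (Req_EM_T (x i) 0) as [|Hne]; [assumption|].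
  exfalso. exact (Rabs_no_R0 _ Hne Hxi).
Qed.

Lemma lqnorm_rpow (d : nat) (q : R) (x : vec) :
  0 < q -> rpow (lqnorm d q x) q = fsum d (fun i => rpow (Rabs (x i)) q).
Proof.
  intros Hq. unfold lqnorm.
  rewrite rpow_rpow, Rinv_l, rpow_1 by (try apply sum_rpow_ge0; lra). reflexivity.
Qed.

Lemma lqnorm_1 (d : nat) (x : vec) : lqnorm d 1 x = fsum d (fun i => Rabs (x i)).
Proof.
  unfold lqnorm. rewrite Rinv_1, rpow_1 by apply sum_rpow_ge0.
  apply fsum_ext. intros. apply rpow_1, Rabs_pos.
Qed.

Lemma lqnorm_scale (d : nat) (q t : R) (x : vec) :
  0 < q -> lqnorm d q (fun i => t * x i) = Rabs t * lqnorm d q x.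
Proof.
  intros Hq. unfold lqnorm.
  rewrite (fsum_ext _ _ (fun i => rpow (Rabs t) q * rpow (Rabs (x i)) q)).
  - rewrite fsum_scal, rpow_mult_distr, rpow_rpow, Rinv_r, rpow_1;
      try apply Rabs_pos; try apply rpow_ge0; try apply sum_rpow_ge0; lra.
  - intros. rewrite Rabs_mult, rpow_mult_distr; auto; apply Rabs_pos.
Qed.

Lemma lqnorm_normalized (d : nat) (q : R) (x : vec) : 0 < q -> 0 < lqnorm d q x ->
  fsum d (fun i => rpow (Rabs (x i) / lqnorm d q x) q) = 1.
Proof.
  intros Hq Hx. pose proof (rpow_gt0 _ q Hx).
  unfold Rdiv. rewrite (fsum_ext _ _ (fun i => rpow (Rabs (x i)) q * / rpow (lqnorm d q x) q)).
  - rewrite fsum_scal_r, <- lqnorm_rpow by exact Hq. field. lra.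
  - intros. rewrite rpow_mult_distr, rpow_Rinv;
      auto; [apply Rabs_pos | left; apply Rinv_0_lt_compat; auto].
Qed.

Lemma holder (d : nat) (r s : R) (x y : vec) : 1 < r -> 1 < s -> / r + / s = 1 ->
  fsum d (fun i => Rabs (x i) * Rabs (y i)) <= lqnorm d r x * lqnorm d s y.
Proof.
  intros Hr Hs Hrs.
  destruct (lqnorm_ge0 d r x) as [HA|HA]; [destruct (lqnorm_ge0 d s y) as [HB|HB]|];
    set (A := lqnorm d r x) in *; set (B := lqnorm d s y) in *.
  - assert (E : fsum d (fun i => Rabs (x i) * Rabs (y i)) =
                A * B * fsum d (fun i => (Rabs (x i) / A) * (Rabs (y i) / B))).
    { rewrite <- fsum_scal. apply fsum_ext. intros. field. lra. }
    rewrite E. rewrite <- (Rmult_1_r (A * B)) at 2.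
    apply Rmult_le_compat_l; [left; apply Rmult_lt_0_compat; assumption|].
    eapply Rle_trans.
    + apply fsum_le. intros.
      apply (young (Rabs (x i) / A) (Rabs (y i) / B) r s); auto;
        apply Rmult_le_pos; try apply Rabs_pos; left; apply Rinv_0_lt_compat; assumption.
    + rewrite fsum_plus, !fsum_div_r. unfold A, B.
      rewrite !lqnorm_normalized by (assumption || lra). lra.
  - rewrite <- HB, Rmult_0_r, (fsum_ext _ _ (fun _ => 0)), fsum_const0; [lra|].
    intros i Hi. rewrite (lqnorm_eq0 d s y (eq_sym HB) i Hi), Rabs_R0. ring.
  - rewrite <- HA, Rmult_0_l, (fsum_ext _ _ (fun _ => 0)), fsum_const0; [lra|].
    intros i Hi. rewrite (lqnorm_eq0 d r x (eq_sym HA) i Hi), Rabs_R0. ring.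
Qed.

Lemma conjugate_exponent (q : R) : 1 < q -> 1 < q / (q - 1) /\ / q + / (q / (q - 1)) = 1.
Proof.
  intros Hq. split; [|field; lra].
  apply (Rmult_lt_reg_r (q - 1)); [lra|]. unfold Rdiv. rewrite Rmult_assoc, Rinv_l; lra.
Qed.

Lemma dualnorm_ge0 (d : nat) (q : R) (x : vec) : 0 <= dualnorm d q x.
Proof.
  unfold dualnorm. destruct (Req_EM_T q 1); [|apply lqnorm_ge0].
  unfold supnorm. induction (map _ _) as [|y l IH]; simpl; [lra|].
  eapply Rle_trans; [exact IH | apply Rmax_r].
Qed.

Lemma holder_dualnorm (d : nat) (q : R) (x y : vec) : 1 <= q ->
  Rabs (dot d x y) <= lqnorm d q x * dualnorm d q y.
Proof.
  intros Hq. eapply Rle_trans; [apply Rabs_fsum_le|].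
  rewrite (fsum_ext _ _ (fun i => Rabs (x i) * Rabs (y i))) by (intros; apply Rabs_mult).
  unfold dualnorm. destruct (Req_EM_T q 1) as [->|Hq1].
  - rewrite lqnorm_1, <- fsum_scal_r. apply fsum_le. intros.
    apply Rmult_le_compat_l; [apply Rabs_pos | apply supnorm_ge; assumption].
  - destruct (conjugate_exponent q) as [Hp Hpq]; [lra|]. apply holder; lra.
Qed.

Lemma minkowski (d : nat) (q : R) (x y : vec) : 1 <= q ->
  lqnorm d q (fun i => x i + y i) <= lqnorm d q x + lqnorm d q y.
Proof.
  intros Hq. destruct (Req_EM_T q 1) as [->|Hq1].
  { rewrite !lqnorm_1, <- fsum_plus. apply fsum_le. intros. apply Rabs_triang. }
  set (S := fsum d (fun i => rpow (Rabs (x i + y i)) q)).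
  pose proof (lqnorm_ge0 d q x). pose proof (lqnorm_ge0 d q y).
  assert (HS0 : 0 <= S) by apply sum_rpow_ge0.
  destruct HS0 as [HS|HS].
  2:{ unfold lqnorm at 1. fold S. rewrite <- HS, rpow_0x. lra. }
  set (s := q / (q - 1)).
  destruct (conjugate_exponent q) as [Hs Hqs]; [lra|]. fold s in Hs, Hqs.
  (* [S = sum |x+y| |x+y|^(q-1)], and [|x+y|^(q-1)] has [l_s] norm [S^(1/s)] *)
  set (w := fun i => rpow (Rabs (x i + y i)) (q - 1)).
  assert (Hw : lqnorm d s w = rpow S (/ s)).
  { unfold lqnorm. f_equal. apply fsum_ext. intros. unfold w.
    rewrite Rabs_pos_eq, rpow_rpow by (apply rpow_ge0 || apply Rabs_pos).
    f_equal. unfold s. field. lra. }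
  assert (Hstep : S <= (lqnorm d q x + lqnorm d q y) * rpow S (/ s)).
  { rewrite <- Hw, Rmult_plus_distr_r.
    eapply Rle_trans; [|apply Rplus_le_compat; apply holder; lra].
    rewrite <- fsum_plus. apply fsum_le. intros i Hi. unfold w.
    rewrite (Rabs_pos_eq (rpow _ (q - 1))) by apply rpow_ge0.
    pose proof (Rabs_triang (x i) (y i)).
    pose proof (rpow_ge0 (Rabs (x i + y i)) (q - 1)).
    destruct (Rabs_pos (x i + y i)) as [Hp|Hp].
    - replace q with (1 + (q - 1)) at 1 by ring. rewrite rpow_plus, rpow_1 by lra. nra.
    - rewrite <- Hp, !rpow_0x. pose proof (Rabs_pos (x i)). pose proof (Rabs_pos (y i)). nra. }
  assert (ES : S = rpow S (/ q) * rpow S (/ s)) by (rewrite <- rpow_plus, Hqs, rpow_1; lra).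
  pose proof (rpow_gt0 S (/ s) HS).
  unfold lqnorm at 1. fold S. apply (Rmult_le_reg_r (rpow S (/ s))); [assumption | lra].
Qed.

Lemma lqnorm_convex (d : nat) (q t : R) (x y : vec) : 1 <= q -> 0 <= t <= 1 ->
  lqnorm d q (fun i => (1 - t) * x i + t * y i) <= (1 - t) * lqnorm d q x + t * lqnorm d q y.
Proof.
  intros Hq Ht. eapply Rle_trans; [apply (minkowski d q (fun i => (1 - t) * x i)); lra|].
  rewrite !lqnorm_scale, !Rabs_pos_eq by lra. lra.
Qed.

Lemma lqnorm_sub_le (d : nat) (q : R) (x y : vec) : 1 <= q ->
  lqnorm d q (fun i => x i - y i) <= lqnorm d q x + lqnorm d q y.
Proof.
  intros Hq. rewrite <- (Rmult_1_l (lqnorm d q y)), <- (Rabs_R1), <- Rabs_Ropp,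
    <- lqnorm_scale by lra.
  rewrite (lqnorm_ext _ _ _ (fun i => x i + -1 * y i)) by (intros; ring). apply minkowski, Hq.
Qed.

Lemma mulmv_ext (d : nat) (A : mat) (v w : vec) (i : nat) :
  (forall l, (l < d)%nat -> v l = w l) -> mulmv d A v i = mulmv d A w i.
Proof. intros Hvw. apply fsum_ext. intros l Hl. rewrite Hvw; auto. Qed.

Lemma mulmv_lin (d : nat) (A : mat) (a b : R) (v w : vec) (i : nat) :
  mulmv d A (fun l => a * v l + b * w l) i = a * mulmv d A v i + b * mulmv d A w i.
Proof.
  unfold mulmv. rewrite <- !fsum_scal, <- fsum_plus. apply fsum_ext. intros. ring.
Qed.

Lemma mulmv_vsub (d : nat) (A : mat) (v w : vec) (i : nat) :
  mulmv d A (vsub v w) i = mulmv d A v i - mulmv d A w i.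
Proof.
  rewrite (mulmv_ext _ _ _ (fun l => 1 * v l + -1 * w l)), mulmv_lin by (intros; unfold vsub; ring).
  ring.
Qed.

Lemma mulmv_mulmm (d e : nat) (A B : mat) (v : vec) (i : nat) :
  mulmv d (mulmm e A B) v i = mulmv e A (mulmv d B v) i.
Proof.
  unfold mulmv, mulmm.
  rewrite (fsum_ext e _ (fun m => fsum d (fun l => A i m * (B m l * v l)))),
    fsum_swap by (intros; symmetry; apply fsum_scal).
  apply fsum_ext. intros. rewrite <- fsum_scal_r. apply fsum_ext. intros. ring.
Qed.

Lemma mulmv_fsum (d k : nat) (A : mat) (F : nat -> vec) (i : nat) :
  mulmv d A (fun l => fsum k (fun j => F j l)) i = fsum k (fun j => mulmv d A (F j) i).
Proof.
  unfold mulmv. rewrite <- fsum_swap. apply fsum_ext. intros. symmetry. apply fsum_scal.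
Qed.

Lemma dot_mulmv_trmx (n p : nat) (A : mat) (e v : vec) :
  dot n e (mulmv p A v) = dot p (mulmv n (trmx A) e) v.
Proof.
  unfold dot, mulmv, trmx.
  rewrite (fsum_ext n _ (fun i => fsum p (fun l => e i * (A i l * v l)))),
    fsum_swap by (intros; symmetry; apply fsum_scal).
  apply fsum_ext. intros. rewrite <- fsum_scal_r. apply fsum_ext. intros. ring.
Qed.

Lemma dot_mulmv_decomp (n p k : nat) (X : mat) (M Mp P : nat -> mat) (e v : vec) :
  mat_eq p p (fun a b => fsum k (fun j => mulmm p (mulmm p (P j) (Mp j)) (M j) a b)) idmx ->
  dot n e (mulmv p X v) =
  fsum k (fun j => dot p (design_noise n p X P Mp e j) (mulmv p (M j) v)).
Proof.
  intros Hid.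
  assert (Hv : forall l, (l < p)%nat ->
            v l = fsum k (fun j => mulmv p (mulmm p (mulmm p (P j) (Mp j)) (M j)) v l)).
  { intros l Hl. rewrite <- (fsum_idmx p l v) by exact Hl. unfold mulmv.
    rewrite <- fsum_swap. apply fsum_ext. intros m Hm.
    rewrite <- Hid by assumption. symmetry. apply fsum_scal_r. }
  unfold dot at 1. rewrite (fsum_ext n _ (fun i => fsum k (fun j => e i *
      mulmv p (mulmm p (mulmm p X (P j)) (Mp j)) (mulmv p (M j) v) i))).
  - rewrite fsum_swap. apply fsum_ext. intros. apply dot_mulmv_trmx.
  - intros i _. rewrite fsum_scal, (mulmv_ext p X v _ i Hv), mulmv_fsum. f_equal.
    apply fsum_ext. intros. rewrite !mulmv_mulmm. apply mulmv_ext. intros.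
    rewrite !mulmv_mulmm. reflexivity.
Qed.

Lemma Rabs_dot_mulmv_le (n p k : nat) (X : mat) (M Mp P : nat -> mat) (q : nat -> R)
    (e v : vec) :
  mat_eq p p (fun a b => fsum k (fun j => mulmm p (mulmm p (P j) (Mp j)) (M j) a b)) idmx ->
  (forall j, (j < k)%nat -> 1 <= q j) ->
  Rabs (dot n e (mulmv p X v)) <=
  fsum k (fun j => dualnorm p (q j) (design_noise n p X P Mp e j)
                   * lqnorm p (q j) (mulmv p (M j) v)).
Proof.
  intros Hid Hq. rewrite (dot_mulmv_decomp n p k X M Mp P e v Hid).
  eapply Rle_trans; [apply Rabs_fsum_le | apply fsum_le]. intros j Hj.
  unfold dot. rewrite (fsum_ext p _ (fun i => mulmv p (M j) v i *
    design_noise n p X P Mp e j i)) by (intros; ring).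
  rewrite Rmult_comm. apply holder_dualnorm, Hq, Hj.
Qed.

Lemma sqnorm_residual_segment (n p : nat) (Y : vec) (X : mat) (b d : vec) (t : R) :
  sqnorm n (vsub Y (mulmv p X (fun l => b l + t * d l))) =
  sqnorm n (vsub Y (mulmv p X b)) - 2 * t * dot n (vsub Y (mulmv p X b)) (mulmv p X d)
  + t ^ 2 * sqnorm n (mulmv p X d).
Proof.
  unfold sqnorm, dot. rewrite <- fsum_scal, <- fsum_scal, <- fsum_minus, <- fsum_plus.
  apply fsum_ext. intros i _. unfold vsub.
  rewrite (mulmv_ext p X _ (fun l => 1 * b l + t * d l)), mulmv_lin by (intros; ring).
  ring.
Qed.

Lemma penalty_segment_le (p k : nat) (M : nat -> mat) (q lam : nat -> R) (b b' : vec) (t : R) :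
  (forall j, (j < k)%nat -> 0 <= lam j) -> (forall j, (j < k)%nat -> 1 <= q j) ->
  0 <= t <= 1 ->
  penalty p k M q lam (fun l => b l + t * vsub b' b l)
  <= (1 - t) * penalty p k M q lam b + t * penalty p k M q lam b'.
Proof.
  intros Hlam Hq Ht. unfold penalty. rewrite <- !fsum_scal, <- fsum_plus.
  apply fsum_le. intros j Hj.
  rewrite (lqnorm_ext p (q j) _
             (fun i => (1 - t) * mulmv p (M j) b i + t * mulmv p (M j) b' i)).
  - pose proof (lqnorm_convex p (q j) t (mulmv p (M j) b) (mulmv p (M j) b') (Hq j Hj) Ht).
    pose proof (Hlam j Hj). nra.
  - intros i _. rewrite <- mulmv_lin. apply mulmv_ext. intros. unfold vsub. ring.
Qed.

Lemma quadratic_derivable_at_0 (s a e : R) :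
  derivable_pt_lim (fun t => s - 2 * t * a + t ^ 2 * e) 0 (- 2 * a).
Proof.
  replace (- 2 * a) with (0 - 2 * 1 * a + INR 2 * 0 ^ 1 * e) by (simpl; ring).
  apply derivable_pt_lim_plus.
  - apply derivable_pt_lim_minus; [apply derivable_pt_lim_const|].
    apply derivable_pt_lim_scal_right, derivable_pt_lim_scal, derivable_pt_lim_id.
  - apply derivable_pt_lim_scal_right, derivable_pt_lim_pow.
Qed.

Lemma derivative_ge_of_increment_ge (phi : R -> R) (l delta : R) :
  derivable_pt_lim phi 0 l -> (forall t, 0 < t <= 1 -> t * delta <= phi t - phi 0) ->
  delta <= l.
Proof.
  intros Hphi Hinc. apply Rnot_lt_le. intros Hlt.
  destruct (Hphi ((delta - l) / 2)) as [eta Heta]; [lra|].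
  pose proof (cond_pos eta).
  set (h := Rmin (eta / 2) 1).
  assert (0 < h) by (apply Rmin_pos; lra).
  assert (h <= 1) by apply Rmin_r.
  assert (h <= eta / 2) by apply Rmin_l.
  specialize (Heta h ltac:(lra) ltac:(rewrite Rabs_pos_eq; lra)).
  rewrite Rplus_0_l in Heta. apply Rabs_def2 in Heta.
  assert (delta <= (phi h - phi 0) / h).
  { apply (Rmult_le_reg_r h); [lra|]. unfold Rdiv.
    rewrite Rmult_assoc, Rinv_l by lra. specialize (Hinc h ltac:(lra)). lra. }
  lra.
Qed.

Lemma objective_first_order (n p k : nat) (g : R -> R) (g' : R) (X : mat) (Y : vec)
    (M : nat -> mat) (q lam : nat -> R) (bh b : vec) :
  (forall j, (j < k)%nat -> 0 <= lam j) -> (forall j, (j < k)%nat -> 1 <= q j) ->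
  derivable_pt_lim g (sqnorm n (vsub Y (mulmv p X bh))) g' ->
  (forall b, objective n p k g X Y M q lam bh <= objective n p k g X Y M q lam b) ->
  2 * g' * dot n (vsub Y (mulmv p X bh)) (mulmv p X (vsub b bh))
  <= penalty p k M q lam b - penalty p k M q lam bh.
Proof.
  intros Hlam Hq Hg Hmin.
  set (s := sqnorm n (vsub Y (mulmv p X bh))) in *.
  set (a := dot n (vsub Y (mulmv p X bh)) (mulmv p X (vsub b bh))).
  set (f := fun t => s - 2 * t * a + t ^ 2 * sqnorm n (mulmv p X (vsub b bh))).
  assert (Hf0 : f 0 = s) by (unfold f; ring).
  assert (Hgf : derivable_pt_lim (comp g f) 0 (g' * (- 2 * a))).
  { apply derivable_pt_lim_comp; [apply quadratic_derivable_at_0 | rewrite Hf0; exact Hg]. }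
  enough (penalty p k M q lam bh - penalty p k M q lam b <= g' * (- 2 * a)) by lra.
  apply (derivative_ge_of_increment_ge _ _ _ Hgf). intros t Ht.
  pose proof (Hmin (fun l => bh l + t * vsub b bh l)) as Hmin_t.
  unfold objective in Hmin_t. rewrite sqnorm_residual_segment in Hmin_t.
  pose proof (penalty_segment_le p k M q lam bh b t Hlam Hq ltac:(lra)).
  fold s a in Hmin_t. unfold comp. rewrite Hf0. unfold f, penalty in *. lra.
Qed.

Lemma dot_le_young (d : nat) (x y : vec) (u : R) :
  0 < u -> dot d x y <= u * sqnorm d x + / (4 * u) * sqnorm d y.
Proof.
  intros Hu.
  assert (H0 : 0 <= fsum d (fun i => (2 * u * x i - y i) * (2 * u * x i - y i)))
    by (apply fsum_nonneg; intros; apply Rle_0_sqr).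
  rewrite (fsum_ext d _ (fun i => (4 * u * u) * (x i * x i) - (4 * u) * (x i * y i) + y i * y i)),
    fsum_plus, fsum_minus, !fsum_scal in H0 by (intros; ring).
  unfold dot, sqnorm. apply (Rmult_le_reg_l (4 * u)); [lra|].
  rewrite Rmult_plus_distr_l, <- (Rmult_assoc (4 * u) (/ (4 * u))), Rinv_r, Rmult_1_l by lra.
  lra.
Qed.

Lemma basic_inequality (n p k : nat) (g gp : R -> R) (X : mat) (beta_star eps Y : vec)
    (M Mp P : nat -> mat) (q c lam : nat -> R) (beta_hat beta : vec) :
  (forall i, (i < n)%nat -> Y i = mulmv p X beta_star i + eps i) ->
  mat_eq p p (fun a b => fsum k (fun j => mulmm p (mulmm p (P j) (Mp j)) (M j) a b)) idmx ->
  (forall j, (j < k)%nat -> 1 <= q j) ->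
  (forall j, (j < k)%nat -> 0 <= lam j) ->
  (forall b, objective n p k g X Y M q lam beta_hat <= objective n p k g X Y M q lam b) ->
  derivable_pt_lim g (sqnorm n (vsub Y (mulmv p X beta_hat)))
    (gp (sqnorm n (vsub Y (mulmv p X beta_hat)))) ->
  0 < gp (sqnorm n (vsub Y (mulmv p X beta_hat))) ->
  (forall j, (j < k)%nat ->
     lam j / (2 * gp (sqnorm n (vsub Y (mulmv p X beta_hat))))
     = c j * dualnorm p (q j) (design_noise n p X P Mp eps j)) ->
  sqnorm n (mulmv p X (vsub beta_star beta_hat)) <=
  dot n (mulmv p X (vsub beta_star beta_hat)) (mulmv p X (vsub beta_star beta))
  + fsum k (fun j => (1 + c j) * dualnorm p (q j) (design_noise n p X P Mp eps j)
                     * lqnorm p (q j) (mulmv p (M j) beta))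
  - fsum k (fun j => (c j - 1) * dualnorm p (q j) (design_noise n p X P Mp eps j)
                     * lqnorm p (q j) (mulmv p (M j) beta_hat)).
Proof.
  intros Hmodel Hid Hq Hlam Hmin Hg Hgp Htune.
  set (s := sqnorm n (vsub Y (mulmv p X beta_hat))) in *.
  set (D := fun j => dualnorm p (q j) (design_noise n p X P Mp eps j)).
  set (N := fun j b => lqnorm p (q j) (mulmv p (M j) b)).
  set (W := mulmv p X (vsub beta_star beta_hat)).
  set (V := mulmv p X (vsub beta_star beta)).
  set (a := dot n (vsub Y (mulmv p X beta_hat)) (mulmv p X (vsub beta beta_hat))).
  assert (Hfo := objective_first_order n p k g (gp s) X Y M q lam beta_hat beta Hlam Hq Hg Hmin).
  fold a in Hfo.
  assert (Hpen : penalty p k M q lam beta - penalty p k M q lam beta_hat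
                 = 2 * gp s * fsum k (fun j => c j * D j * (N j beta - N j beta_hat))).
  { unfold penalty. rewrite <- fsum_minus, <- fsum_scal. apply fsum_ext. intros j Hj.
    unfold D, N. rewrite <- (Htune j Hj). field. lra. }
  assert (Ha : a = sqnorm n W - dot n W V + dot n eps (mulmv p X (vsub beta beta_hat))).
  { unfold a, sqnorm, dot. rewrite <- fsum_minus, <- fsum_plus. apply fsum_ext. intros i Hi.
    unfold vsub at 1. rewrite Hmodel by exact Hi.
    unfold W, V. rewrite !mulmv_vsub. ring. }
  assert (Hnoise : - fsum k (fun j => D j * (N j beta + N j beta_hat))
                   <= dot n eps (mulmv p X (vsub beta beta_hat))).
  { assert (Htri : fsum k (fun j => D j * N j (vsub beta beta_hat))
                   <= fsum k (fun j => D j * (N j beta + N j beta_hat))).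
    { apply fsum_le. intros j Hj. apply Rmult_le_compat_l; [apply dualnorm_ge0|].
      unfold N.
      rewrite (lqnorm_ext _ _ _ (fun i => mulmv p (M j) beta i - mulmv p (M j) beta_hat i))
        by (intros; apply mulmv_vsub).
      apply lqnorm_sub_le, Hq, Hj. }
    pose proof (Rabs_dot_mulmv_le n p k X M Mp P q eps (vsub beta beta_hat) Hid Hq) as Habs.
    pose proof (Rle_abs (- dot n eps (mulmv p X (vsub beta beta_hat)))) as Hneg.
    rewrite Rabs_Ropp in Hneg. unfold D, N in *. lra. }
  assert (Hsplit : fsum k (fun j => c j * D j * (N j beta - N j beta_hat))
                   + fsum k (fun j => D j * (N j beta + N j beta_hat))
                   = fsum k (fun j => (1 + c j) * D j * N j beta)
                     - fsum k (fun j => (c j - 1) * D j * N j beta_hat)).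
  { rewrite <- fsum_plus, <- fsum_minus. apply fsum_ext. intros. ring. }
  assert (Ha_le : a <= fsum k (fun j => c j * D j * (N j beta - N j beta_hat))).
  { apply (Rmult_le_reg_l (2 * gp s)); lra. }
  unfold D, N in *. cbv beta in *. lra.
Qed.

Lemma fsum_div_mult (d : nat) (c : R) (f g h : nat -> R) :
  fsum d (fun i => f i / c * g i * h i) = / c * fsum d (fun i => f i * g i * h i).
Proof. rewrite <- fsum_scal. apply fsum_ext. intros. unfold Rdiv. ring. Qed.

Lemma rescale_basic_inequality (N u A B C S1 S2 : R) :
  0 < N -> 0 < u < 1 -> A <= B + S1 - S2 -> B <= u * A + / (4 * u) * C ->
  / N * A <= / (4 * u * (1 - u) * N) * C + / N * (/ (1 - u) * S1) - / N * (/ (1 - u) * S2).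
Proof.
  intros HN Hu HAB HB.
  apply (Rmult_le_reg_l (N * (1 - u))); [apply Rmult_lt_0_compat; lra|].
  replace (N * (1 - u) * (/ N * A)) with ((1 - u) * A) by (field; lra).
  replace (N * (1 - u) * (/ (4 * u * (1 - u) * N) * C + / N * (/ (1 - u) * S1)
             - / N * (/ (1 - u) * S2))) with (/ (4 * u) * C + S1 - S2) by (field; lra).
  lra.
Qed.

Theorem theorem1
  (n p k : nat) (g gp : R -> R)
  (X : mat) (beta_star : vec) (eps : vec) (Y : vec)
  (M Mp P : nat -> mat) (q c lam : nat -> R) (beta_hat : vec) :
  (forall i, (i < n)%nat -> Y i = mulmv p X beta_star i + eps i) ->
  link_ok n g gp ->
  (1 <= k)%nat ->
  (forall b : vec, (forall j, (j < k)%nat -> forall i, (i < p)%nat ->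
        mulmv p (M j) b i = 0) ->
     forall i, (i < p)%nat -> b i = 0) ->
  (forall j, (j < k)%nat -> 1 <= q j) ->
  (forall j, (j < k)%nat -> is_MP_pinv p (M j) (Mp j)) ->
  (forall j, (j < k)%nat -> is_projection p (P j)) ->
  mat_eq p p (fun a b => fsum k (fun j => mulmm p (mulmm p (P j) (Mp j)) (M j) a b))
             idmx ->
  (exists i, (i < n)%nat /\ Y i <> 0) ->
  (forall j, (j < k)%nat ->
     0 < dualnorm p (q j) (mulmv n (trmx (mulmm p (mulmm p X (P j)) (Mp j))) eps)) ->
  (forall j, (j < k)%nat -> 0 < c j) ->
  (forall j, (j < k)%nat -> 0 < lam j) ->
  (forall b : vec, objective n p k g X Y M q lam beta_hat
                   <= objective n p k g X Y M q lam b) ->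
  0 < sqnorm n (vsub Y (mulmv p X beta_hat)) ->
  (forall j, (j < k)%nat ->
     lam j / (2 * gp (sqnorm n (vsub Y (mulmv p X beta_hat))))
     = c j * dualnorm p (q j) (mulmv n (trmx (mulmm p (mulmm p X (P j)) (Mp j))) eps)) ->
  forall (u : R) (beta : vec), 0 < u < 1 ->
    / INR n * sqnorm n (mulmv p X (vsub beta_star beta_hat))
    <= / (4 * u * (1 - u) * INR n) * sqnorm n (mulmv p X (vsub beta_star beta))
       + / INR n * fsum k (fun j =>
            (1 + c j) / (1 - u)
            * dualnorm p (q j) (mulmv n (trmx (mulmm p (mulmm p X (P j)) (Mp j))) eps)
            * lqnorm p (q j) (mulmv p (M j) beta))
       - / INR n * fsum k (fun j =>
            (c j - 1) / (1 - u)
            * dualnorm p (q j) (mulmv n (trmx (mulmm p (mulmm p X (P j)) (Mp j))) eps)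
            * lqnorm p (q j) (mulmv p (M j) beta_hat)).
Proof.
  intros Hmodel Hlink _ _ Hq _ _ Hid _ _ _ Hlam Hmin Hs Htune u beta Hu.
  destruct Hlink as (_ & _ & _ & _ & Hder & _ & Hgp & _).
  assert (Hn : 0 < INR n).
  { destruct n as [|n']; [unfold sqnorm, fsum in Hs; simpl in Hs; lra | apply lt_0_INR; lia]. }
  rewrite !fsum_div_mult.
  apply rescale_basic_inequality with
    (B := dot n (mulmv p X (vsub beta_star beta_hat)) (mulmv p X (vsub beta_star beta))).
  - exact Hn.
  - exact Hu.
  - apply (basic_inequality n p k g gp X beta_star eps Y M Mp P q c lam); auto.
    intros j Hj. left. apply Hlam, Hj.
  - apply dot_le_young. lra.
Qed.
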